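(* Let $a,b,d,f\in\mathbb{C}$ with $b\neq0$ and $d\neq 0$. Then the node-wise equi-M sets of the two nodes coincide: $\mathcal{M}(z_1)=\mathcal{M}(z_2)$.
   Context: For $c\in\mathbb{C}$, the 2D coupled quadratic system with connectivity matrix $A=\begin{pmatrix}a&b\\ d&f\end{pmatrix}$ is the iteration $z_1(n+1)=(az_1(n)+bz_2(n))^2+c$, $z_2(n+1)=(dz_1(n)+fz_2(n))^2+c$. The critical orbit is the orbit with $z_1(0)=z_2(0)=0$. The node-wise equi-M set $\mathcal{M}(z_k)$ ($k=1,2$) is the set of $c\in\mathbb{C}$ for which the sequence $(z_k(n))_{n\ge0}$ of the critical orbit is bounded. *)

From Stdlib Require Import Reals.
From Coquelicot Require Import Coquelicot.
Open Scope R_scope.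

(* Critical orbit of the 2D coupled quadratic system with connectivity
   matrix A = [[a, b], [d, f]]:
   z1(n+1) = (a z1(n) + b z2(n))^2 + c,  z2(n+1) = (d z1(n) + f z2(n))^2 + c,
   z1(0) = z2(0) = 0. *)
Fixpoint crit_orbit (a b d f c : C) (n : nat) : C * C :=
  match n with
  | O => (RtoC 0, RtoC 0)
  | S m =>
      let (z1, z2) := crit_orbit a b d f c m in
      (Cplus (Cmult (Cplus (Cmult a z1) (Cmult b z2)) (Cplus (Cmult a z1) (Cmult b z2))) c,
       Cplus (Cmult (Cplus (Cmult d z1) (Cmult f z2)) (Cplus (Cmult d z1) (Cmult f z2))) c)
  end.

Definition z1 (a b d f c : C) (n : nat) : C := fst (crit_orbit a b d f c n).
Definition z2 (a b d f c : C) (n : nat) : C := snd (crit_orbit a b d f c n).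

Definition bounded_seq (u : nat -> C) : Prop :=
  exists M : R, forall n : nat, Cmod (u n) <= M.

Definition equiM1 (a b d f : C) (c : C) : Prop := bounded_seq (z1 a b d f c).
Definition equiM2 (a b d f : C) (c : C) : Prop := bounded_seq (z2 a b d f c).

From Stdlib Require Import Reals Lra.
From Coquelicot Require Import Coquelicot.

(* Write w1(n) = a z1(n) + b z2(n), so that z1(n+1) = w1(n)^2 + c.
   If z1 is bounded then so is w1(n)^2 = z1(n+1) - c, hence so is w1 (a complex
   number whose square has modulus at most K has modulus at most K + 1).  Since
   b <> 0 we can solve z2(n) = (w1(n) - a z1(n)) / b, a combination of bounded
   sequences, so z2 is bounded.  The converse is symmetric, using
   w2(n) = f z2(n) + d z1(n) and d <> 0. *)

Lemma Cmod_le_of_sq_le (w : C) (K : R) :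
  Cmod w * Cmod w <= K -> Cmod w <= K + 1.
Proof.
  intro Hsq. pose proof (Cmod_ge_0 w).
  destruct (Rle_or_lt (Cmod w) 1); nra.
Qed.

Lemma bounded_of_square_recurrence (u w : nat -> C) (c : C) :
  (forall n, u (S n) = Cplus (Cmult (w n) (w n)) c) ->
  bounded_seq u -> bounded_seq w.
Proof.
  intros Hrec [M HM].
  exists (M + Cmod c + 1). intro n.
  apply Cmod_le_of_sq_le.
  assert (Hsq : Cmult (w n) (w n) = Cminus (u (S n)) c).
  { rewrite Hrec. unfold Cminus.
    rewrite <- Cplus_assoc, Cplus_opp_r, Cplus_0_r. reflexivity. }
  rewrite <- Cmod_mult, Hsq. unfold Cminus.
  eapply Rle_trans; [apply Cmod_triangle|].
  rewrite Cmod_opp. specialize (HM (S n)). lra.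
Qed.

Lemma bounded_of_linear_relation (x y w : nat -> C) (p q : C) :
  (forall n, w n = Cplus (Cmult p (x n)) (Cmult q (y n))) ->
  q <> RtoC 0 -> bounded_seq x -> bounded_seq w -> bounded_seq y.
Proof.
  intros Hw hq [Mx HMx] [Mw HMw].
  assert (Hq : 0 < Cmod q).
  { destruct (Rle_lt_or_eq_dec 0 (Cmod q) (Cmod_ge_0 q)) as [h|h]; auto.
    exfalso; apply hq, Cmod_eq_0; auto. }
  exists ((Mw + Cmod p * Mx) / Cmod q). intro n.
  assert (Hqy : Cmult q (y n) = Cminus (w n) (Cmult p (x n))).
  { rewrite Hw. unfold Cminus.
    rewrite (Cplus_comm (Cmult p (x n))), <- Cplus_assoc, Cplus_opp_r, Cplus_0_r.
    reflexivity. }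
  assert (Hbound : Cmod q * Cmod (y n) <= Mw + Cmod p * Mx).
  { rewrite <- Cmod_mult, Hqy. unfold Cminus.
    eapply Rle_trans; [apply Cmod_triangle|].
    rewrite Cmod_opp, Cmod_mult.
    pose proof (HMw n). pose proof (HMx n). pose proof (Cmod_ge_0 p).
    assert (Cmod p * Cmod (x n) <= Cmod p * Mx) by (apply Rmult_le_compat_l; lra).
    lra. }
  apply (Rmult_le_reg_l (Cmod q)); auto.
  unfold Rdiv. rewrite (Rmult_comm _ (/ Cmod q)), <- Rmult_assoc, Rinv_r by lra.
  rewrite Rmult_1_l. exact Hbound.
Qed.

Lemma z1_succ (a b d f c : C) (n : nat) :
  z1 a b d f c (S n) =
  Cplus (Cmult (Cplus (Cmult a (z1 a b d f c n)) (Cmult b (z2 a b d f c n)))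
               (Cplus (Cmult a (z1 a b d f c n)) (Cmult b (z2 a b d f c n)))) c.
Proof. unfold z1, z2; simpl. destruct (crit_orbit a b d f c n). reflexivity. Qed.

Lemma z2_succ (a b d f c : C) (n : nat) :
  z2 a b d f c (S n) =
  Cplus (Cmult (Cplus (Cmult d (z1 a b d f c n)) (Cmult f (z2 a b d f c n)))
               (Cplus (Cmult d (z1 a b d f c n)) (Cmult f (z2 a b d f c n)))) c.
Proof. unfold z1, z2; simpl. destruct (crit_orbit a b d f c n). reflexivity. Qed.

Theorem mainTheorem7 (a b d f : C) (hb : b <> (RtoC 0)) (hd : d <> (RtoC 0)) :
  forall c : C, equiM1 a b d f c <-> equiM2 a b d f c.
Proof.
  intro c. unfold equiM1, equiM2. split; intro Hbdd.
  - (* w1 = a z1 + b z2 is bounded, then solve for z2 using b <> 0 *)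
    apply (bounded_of_linear_relation (z1 a b d f c) _
             (fun n => Cplus (Cmult a (z1 a b d f c n)) (Cmult b (z2 a b d f c n)))
             a b); auto.
    apply (bounded_of_square_recurrence (z1 a b d f c) _ c); auto.
    exact (z1_succ a b d f c).
  - (* w2 = f z2 + d z1 is bounded, then solve for z1 using d <> 0 *)
    apply (bounded_of_linear_relation (z2 a b d f c) _
             (fun n => Cplus (Cmult f (z2 a b d f c n)) (Cmult d (z1 a b d f c n)))
             f d); auto.
    apply (bounded_of_square_recurrence (z2 a b d f c) _ c); auto.
    intro n. rewrite z2_succ, (Cplus_comm (Cmult d _)). reflexivity.
Qed.
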